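(* Let $\{x^k\}_k$, $\{z^k\}_k$ be generated by the normal map-based stochastic proximal gradient method described in the context. Then for all integers $0\le m<n$ (and every sample, with the right-hand side interpreted as $+\infty$ when $L=\infty$), \[ \psi(x^n)-\psi(x^m)\le\Big(\frac{L}{2}-\frac1\lambda\Big)\|x^n-x^m\|^2+\langle F^\lambda_{\mathrm{nor}}(z^m),x^n-x^m\rangle+\frac1\lambda\langle z^n-z^m,x^n-x^m\rangle. \]
   Context: Let $\varphi:\mathbb{R}^d\to(-\infty,\infty]$ be convex, lower semicontinuous and proper, let $f:\mathbb{R}^d\to\mathbb{R}$ be continuously differentiable on an open set containing $\mathrm{dom}\,\varphi$, and set $\psi=f+\varphi$. For $\lambda>0$ let $\mathrm{prox}_{\lambda\varphi}(x)=\operatorname{argmin}_y\{\varphi(y)+\frac{1}{2\lambda}\|x-y\|^2\}$, $\mathrm{env}_{\lambda\varphi}$ the Moreau envelope with $\nabla\mathrm{env}_{\lambda\varphi}(x)=(x-\mathrm{prox}_{\lambda\varphi}(x))/\lambda$, and the normal map $F^\lambda_{\mathrm{nor}}(z)=\nabla f(\mathrm{prox}_{\lambda\varphi}(z))+\frac1\lambda(z-\mathrm{prox}_{\lambda\varphi}(z))$. Method: on a filtered probability space $(\Omega,\mathcal F,\{\mathcal F_k\}_k,\mathbb P)$, with $\lambda>0$, step sizes $\alpha_k>0$, deterministic $z^0$, $x^0=\mathrm{prox}_{\lambda\varphi}(z^0)$, and $\mathcal F_{k+1}$-measurable random vectors $g^k$, set $z^{k+1}=z^k-\alpha_k(g^k+\nabla\mathrm{env}_{\lambda\varphi}(z^k))$,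 $x^{k+1}=\mathrm{prox}_{\lambda\varphi}(z^{k+1})$. $L(\omega)=\sup_{\bar x\in\mathrm{cl}(\mathrm{conv}\{x^k(\omega)\}_k)}\mathrm{lip}\,\nabla f(\bar x)$, where $\mathrm{lip}\,\nabla f(\bar x)=\limsup_{x,x'\to\bar x,\,x\ne x'}\|\nabla f(x)-\nabla f(x')\|/\|x-x'\|$. *)

From HB Require Import structures.
From mathcomp Require Import all_boot all_order all_algebra.
From mathcomp Require Import all_classical all_reals ereal.
Set Implicit Arguments. Unset Strict Implicit. Unset Printing Implicit Defensive.
Import Order.TTheory GRing.Theory Num.Theory.
Local Open Scope ring_scope.
Local Open Scope classical_set_scope.

Section Defs.
Variables (R : realType) (d : nat).
Local Notation vec := 'rV[R]_d.

Definition dotp (u v : vec) : R := \sum_(i < d) u ord0 i * v ord0 i.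
Definition enorm (u : vec) : R := Num.sqrt (dotp u u).

Definition econvex (phi : vec -> \bar R) : Prop :=
  forall (x y : vec) (t : R), 0 <= t -> t <= 1 ->
    (phi (t *: x + (1 - t) *: y)%R <= t%:E * phi x + (1 - t)%:E * phi y)%E.

Definition elsc (phi : vec -> \bar R) : Prop :=
  forall (x : vec) (a : R), (a%:E < phi x)%E ->
    exists2 del : R, 0 < del &
      forall y : vec, enorm (y - x) < del -> (a%:E < phi y)%E.

Definition eproper (phi : vec -> \bar R) : Prop :=
  (forall x, phi x <> -oo%E) /\ (exists x, (phi x < +oo)%E).

Definition edom (phi : vec -> \bar R) : set vec := [set x | (phi x < +oo)%E].

Definition eopen (U : set vec) : Prop :=
  forall x, U x -> exists2 r : R, 0 < r & forall y, enorm (y - x) < r -> U y.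

Definition is_gradient_at (f : vec -> R) (gradf : vec -> vec) (x : vec) : Prop :=
  forall eps : R, 0 < eps -> exists2 del : R, 0 < del &
    forall y, enorm (y - x) < del ->
      `|f y - f x - dotp (gradf x) (y - x)| <= eps * enorm (y - x).

Definition continuous_at_e (g : vec -> vec) (x : vec) : Prop :=
  forall eps : R, 0 < eps -> exists2 del : R, 0 < del &
    forall y, enorm (y - x) < del -> enorm (g y - g x) < eps.

Definition C1_on (U : set vec) (f : vec -> R) (gradf : vec -> vec) : Prop :=
  forall x, U x -> is_gradient_at f gradf x /\ continuous_at_e gradf x.

Definition is_prox (lam : R) (phi : vec -> \bar R) (x p : vec) : Prop :=
  forall y : vec,
    (phi p + ((2 * lam)^-1 * enorm (x - p) ^+ 2)%:E <=
     phi y + ((2 * lam)^-1 * enorm (x - y) ^+ 2)%:E)%E.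

Definition lipg (g : vec -> vec) (xb : vec) : \bar R :=
  ereal_inf [set ereal_sup
     [set r : \bar R | exists x x' : vec,
        [/\ enorm (x - xb) < del, enorm (x' - xb) < del, x' != x
          & r = ((enorm (g x - g x') / enorm (x - x'))%:E)%E]]
     | del in [set del : R | 0 < del]].

Definition conv_hull (S : set vec) : set vec :=
  [set y | exists n (w : 'I_n -> R) (p : 'I_n -> vec),
     [/\ (forall i, 0 <= w i), \sum_(i < n) w i = 1, (forall i, S (p i))
       & y = \sum_(i < n) w i *: p i]].

Definition eclosure (S : set vec) : set vec :=
  [set xb | forall eps : R, 0 < eps -> exists2 y, S y & enorm (y - xb) < eps].

End Defs.

(* The prox step makes (z^n - x^n)/lam a subgradient of phi at x^n, so
   phi(x^n) - phi(x^m) <= <z^n - x^n, x^n - x^m>/lam; splitting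
   z^n - x^n = (z^n - z^m) + (z^m - x^m) - (x^n - x^m) produces the terms
   involving z and the -1/lam coefficient.  For the smooth part, the points
   x_t = (1 - t) x^m + t x^n lie in dom phi by convexity, hence where f is C^1,
   and in the closed convex hull of the iterates, where the local Lipschitz
   modulus of grad f is below any L' > L; the descent lemma
   f(x^n) <= f(x^m) + <grad f(x^m), x^n - x^m> + L'/2 |x^n - x^m|^2 gives the
   rest.  It is proved without integration, by real induction on [0, 1]: once
   to turn the local Lipschitz bounds into
   |grad f(x_t) - grad f(x^m)| <= L' t |x^n - x^m|, and once to show that
   t |-> f(x_t) - t <grad f(x^m), x^n - x^m> - L'/2 t^2 |x^n - x^m|^2, whose
   derivative is nonpositive, is nonincreasing. *)

From HB Require Import structures.
From mathcomp Require Import all_boot all_order all_algebra.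
From mathcomp Require Import all_classical all_reals ereal.
From mathcomp Require Import ring lra.
Set Implicit Arguments. Unset Strict Implicit. Unset Printing Implicit Defensive.
Import Order.TTheory GRing.Theory Num.Theory.
Local Open Scope ring_scope.
Local Open Scope classical_set_scope.

Section RealLine.
Variable R : realType.
Implicit Types (a b c s t x y : R) (Q : R -> Prop).

Lemma ler_slack x y c : (forall t, 0 < t -> t <= 1 -> x <= y + t * c) -> x <= y.
Proof.
move=> H; apply/ler_addgt0Pr => e e0.
have ec0 : 0 < e + `|c| by rewrite ltr_wpDr.
set t := e / (e + `|c|).
have t0 : 0 < t by rewrite divr_gt0.
have t1 : t <= 1 by rewrite ler_pdivrMr // mul1r lerDl.
have te : t * (e + `|c|) = e by rewrite divfK ?gt_eqF.
apply: (le_trans (H t t0 t1)); rewrite lerD2l.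
have := ler_wpM2l (ltW t0) (ler_norm c); have := mulr_ge0 (ltW t0) (ltW e0).
nra.
Qed.

Lemma real_induction a b Q : Q a ->
  (forall t, a <= t <= b -> exists2 del, 0 < del &
     (forall s, a <= s < t -> t - s < del -> Q s -> Q t) /\
     (forall s, t < s <= b -> s - t < del -> Q t -> Q s)) ->
  forall t, a <= t <= b -> Q t.
Proof.
move=> Qa Hloc t /andP[ta tb].
pose A := [set u | [/\ a <= u, u <= b & forall s, a <= s <= u -> Q s]].
have Aa : A a.
  split=> // [|s /andP[hs sa]]; first exact: le_trans tb.
  by have -> : s = a by apply/eqP; rewrite eq_le sa hs.
have supA : has_sup A by split; [exists a | exists b => u []].
set c := sup A.
have ac : a <= c by exact: sup_upper_bound.
have cb : c <= b by apply: ge_sup; [exists a | move=> u []].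
have Q_below s : a <= s < c -> Q s.
  case/andP=> hs sc; have cs : 0 < c - s by rewrite subr_gt0.
  have [u [_ _ Qu] su] := sup_adherent cs supA.
  by apply: Qu; rewrite hs /=; move: su; rewrite -/c; lra.
have acb : a <= c <= b by rewrite ac cb.
have [del del0 [Hback Hfwd]] := Hloc c acb.
have Qc : Q c.
  have [{}ac|ca] := ltrP a c; last by have -> : c = a by apply/eqP; rewrite eq_le ca ac.
  have m1 : Num.min (c - a) del <= c - a by rewrite ge_min lexx.
  have m2 : Num.min (c - a) del <= del by rewrite ge_min lexx orbT.
  have m0 : 0 < Num.min (c - a) del by rewrite lt_min subr_gt0 ac del0.
  apply: (Hback (c - Num.min (c - a) del / 2)); [apply/andP; split; lra|lra|].
  by apply: Q_below; apply/andP; split; lra.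
have Q_upto s : a <= s <= c -> Q s.
  case/andP=> hs; rewrite le_eqVlt => /orP[/eqP -> //|sc].
  by apply: Q_below; rewrite hs sc.
have bc : b <= c.
  rewrite leNgt; apply/negP => cb'.
  have m1 : Num.min (b - c) del <= b - c by rewrite ge_min lexx.
  have m2 : Num.min (b - c) del <= del by rewrite ge_min lexx orbT.
  have m0 : 0 < Num.min (b - c) del by rewrite lt_min subr_gt0 cb' del0.
  have : c + Num.min (b - c) del / 2 <= c; last lra.
  apply: sup_upper_bound => //; split; [lra|lra|move=> s /andP[hs sh]].
  have [sc|cs] := leP s c; first by apply: Q_upto; rewrite hs sc.
  by apply: (Hfwd s); [apply/andP; split; lra|lra|apply: Q_upto; rewrite ac lexx].
by apply: Q_upto; rewrite ta (le_trans tb bc).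
Qed.

Definition has_derivative (h : R -> R) (dh t : R) : Prop :=
  forall eps, 0 < eps -> exists2 del, 0 < del &
    forall s, `|s - t| < del -> `|h s - h t - (s - t) * dh| <= eps * `|s - t|.

Lemma has_derivativeD (h k : R -> R) dh dk t :
  has_derivative h dh t -> has_derivative k dk t ->
  has_derivative (h \+ k) (dh + dk) t.
Proof.
move=> Hh Hk eps eps0; have eps20 : 0 < eps / 2 by rewrite divr_gt0.
have [delh delh0 Hh'] := Hh _ eps20; have [delk delk0 Hk'] := Hk _ eps20.
exists (Num.min delh delk) => [|s]; first by rewrite lt_min delh0 delk0.
rewrite lt_min => /andP[/Hh' hs /Hk' ks] /=.
have -> : h s + k s - (h t + k t) - (s - t) * (dh + dk) =
          (h s - h t - (s - t) * dh) + (k s - k t - (s - t) * dk) by ring.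
by apply: (le_trans (ler_normD _ _)); lra.
Qed.

Lemma has_derivative_quadratic p q t :
  has_derivative (fun s => p * s + q * s ^+ 2) (p + 2 * q * t) t.
Proof.
move=> eps eps0; have q10 : 0 < `|q| + 1 by rewrite ltr_wpDl.
exists (eps / (`|q| + 1)) => [|s]; first by rewrite divr_gt0.
rewrite ltr_pdivlMr // => st.
have -> : p * s + q * s ^+ 2 - (p * t + q * t ^+ 2) - (s - t) * (p + 2 * q * t) =
          q * (s - t) ^+ 2 by ring.
rewrite normrM normrX expr2 mulrA ler_wpM2r //.
have := normr_ge0 q; have := normr_ge0 (s - t); nra.
Qed.

Lemma has_derivative_nonpos_le (k dk : R -> R) a b : a <= b ->
  (forall t, a <= t <= b -> has_derivative k (dk t) t) ->
  (forall t, a <= t <= b -> dk t <= 0) -> k b <= k a.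
Proof.
move=> ab Hk Hdk; apply: (@ler_slack _ _ (b - a)) => eps eps0 _.
apply: (@real_induction a b (fun t => k t <= k a + eps * (t - a))); last by rewrite ab lexx.
  by rewrite subrr mulr0 addr0.
move=> t ht; have [del del0 Hdel] := Hk t ht eps eps0.
have dk0 := Hdk t ht.
exists del => //; split=> s /andP[hs1 hs2] std Qs.
- have := Hdel s; rewrite distrC ger0_norm ?subr_ge0; last exact: ltW.
  by move=> /(_ std); rewrite ler_norml => /andP[+ _]; nra.
- have := Hdel s; rewrite ger0_norm ?subr_ge0; last exact: ltW.
  by move=> /(_ std); rewrite ler_norml => /andP[_ +]; nra.
Qed.

End RealLine.

Section InnerProduct.
Variables (R : realType) (d : nat).
Implicit Types (c : R) (u v w : 'rV[R]_d).

Lemma dotpC u v : dotp u v = dotp v u.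
Proof. by apply: eq_bigr => i _; rewrite mulrC. Qed.

Lemma dotpDl u v w : dotp (u + v) w = dotp u w + dotp v w.
Proof. by rewrite /dotp -big_split; apply: eq_bigr => i _; rewrite !mxE mulrDl. Qed.

Lemma dotpZl c u w : dotp (c *: u) w = c * dotp u w.
Proof. by rewrite /dotp mulr_sumr; apply: eq_bigr => i _; rewrite !mxE mulrA. Qed.

Lemma dotpNl u w : dotp (- u) w = - dotp u w.
Proof. by rewrite -scaleN1r dotpZl mulN1r. Qed.

Lemma dotpBl u v w : dotp (u - v) w = dotp u w - dotp v w.
Proof. by rewrite dotpDl dotpNl. Qed.

Lemma dotpZr c u w : dotp w (c *: u) = c * dotp w u.
Proof. by rewrite dotpC dotpZl dotpC. Qed.

Lemma dotpNr u w : dotp w (- u) = - dotp w u.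
Proof. by rewrite dotpC dotpNl dotpC. Qed.

Lemma dotp0l w : dotp 0 w = 0.
Proof. by rewrite /dotp big1 // => i _; rewrite mxE mul0r. Qed.

Lemma dotp0r w : dotp w 0 = 0.
Proof. by rewrite dotpC dotp0l. Qed.

Lemma dotp_ge0 u : 0 <= dotp u u.
Proof. by apply: sumr_ge0 => i _; rewrite -expr2 sqr_ge0. Qed.

Lemma dotp_eq0 u : (dotp u u == 0) = (u == 0).
Proof.
apply/idP/eqP => [|->]; last by rewrite dotp0l.
rewrite psumr_eq0 => [/allP u0|i _]; last by rewrite -expr2 sqr_ge0.
apply/rowP => i; rewrite mxE; apply/eqP.
by rewrite -sqrf_eq0 expr2 (implyP (u0 i (mem_index_enum i))).
Qed.

Lemma enorm_sq u : enorm u ^+ 2 = dotp u u.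
Proof. by rewrite sqr_sqrtr // dotp_ge0. Qed.

Lemma enorm_ge0 u : 0 <= enorm u.
Proof. exact: sqrtr_ge0. Qed.

Lemma enorm_gt0 u : (0 < enorm u) = (u != 0).
Proof. by rewrite sqrtr_gt0 lt_def dotp_ge0 dotp_eq0 andbT. Qed.

Lemma enorm0 : enorm (0 : 'rV[R]_d) = 0.
Proof. by apply/eqP; rewrite eq_le enorm_ge0 leNgt enorm_gt0 eqxx. Qed.

Lemma enormZ c u : enorm (c *: u) = `|c| * enorm u.
Proof. by rewrite /enorm dotpZl dotpZr mulrA -expr2 sqrtrM ?sqr_ge0 // sqrtr_sqr. Qed.

Lemma enorm_sqD u v :
  enorm (u + v) ^+ 2 = enorm u ^+ 2 + 2 * dotp u v + enorm v ^+ 2.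
Proof. by rewrite !enorm_sq dotpDl !(dotpC _ (u + v)) !dotpDl (dotpC v u); ring. Qed.

(* Expand [|| |v| u - |u| v ||^2 >= 0]. *)
Lemma cauchy_schwarz u v : dotp u v <= enorm u * enorm v.
Proof.
have [->|u0] := eqVneq u 0; first by rewrite dotp0l enorm0 mul0r.
have [->|v0] := eqVneq v 0; first by rewrite dotp0r enorm0 mulr0.
have := sqr_ge0 (enorm (enorm v *: u + (- enorm u) *: v)).
rewrite enorm_sqD dotpZl dotpZr !enormZ normrN !ger0_norm ?enorm_ge0 //.
have : 0 < enorm u * enorm v by rewrite mulr_gt0 ?enorm_gt0.
nra.
Qed.

Lemma enorm_triangle u v : enorm (u + v) <= enorm u + enorm v.
Proof.
rewrite -(ler_pXn2r (n := 2)) ?nnegrE ?addr_ge0 ?enorm_ge0 // enorm_sqD.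
by have := cauchy_schwarz u v; lra.
Qed.

End InnerProduct.

Section Segment.
Variables (R : realType) (d : nat).
Local Notation vec := 'rV[R]_d.
Implicit Types (a b : vec) (s t : R).

Definition lerp a b t : vec := t *: b + (1 - t) *: a.

Lemma lerp0 a b : lerp a b 0 = a.
Proof. by rewrite /lerp scale0r add0r subr0 scale1r. Qed.

Lemma lerp1 a b : lerp a b 1 = b.
Proof. by rewrite /lerp subrr scale0r addr0 scale1r. Qed.

Lemma lerpB a b s t : lerp a b s - lerp a b t = (s - t) *: (b - a).
Proof. by apply/rowP => i; rewrite !mxE; ring. Qed.

Lemma enorm_lerpB a b s t : enorm (lerp a b s - lerp a b t) = `|s - t| * enorm (b - a).
Proof. by rewrite lerpB enormZ. Qed.

Definition locally_lipschitz_at (g : vec -> vec) (L : R) (xb : vec) : Prop :=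
  exists2 del, 0 < del & forall x x', enorm (x - xb) < del -> enorm (x' - xb) < del ->
    enorm (g x - g x') <= L * enorm (x - x').

Lemma locally_lipschitz_bound (G : R -> vec) (K s0 s1 : R) :
  (forall t, s0 <= t <= s1 -> exists2 del, 0 < del & forall s s',
     `|s - t| < del -> `|s' - t| < del -> enorm (G s - G s') <= K * `|s - s'|) ->
  forall t, s0 <= t <= s1 -> enorm (G t - G s0) <= K * (t - s0).
Proof.
move=> Hlip; apply: real_induction => [|t ht]; first by rewrite !subrr enorm0 mulr0.
have [del del0 Hdel] := Hlip t ht.
have Gstep s r : G r - G s0 = (G s - G s0) + (G r - G s).
  by rewrite [RHS]addrC addrA subrK.
exists del => //; split=> s /andP[hs1 hs2] std Qs.
- have hs := ltW hs2; have := Hdel t s; rewrite subrr normr0 distrC ger0_norm ?subr_ge0 //.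
  move=> /(_ del0 std) Gts; rewrite (Gstep s).
  by apply: (le_trans (enorm_triangle _ _)); lra.
- have hs := ltW hs1; have := Hdel s t; rewrite subrr normr0 ger0_norm ?subr_ge0 //.
  move=> /(_ std del0) Gst; rewrite (Gstep t).
  by apply: (le_trans (enorm_triangle _ _)); lra.
Qed.

Lemma has_derivative_lerp (f : vec -> R) (gradf : vec -> vec) a b t :
  is_gradient_at f gradf (lerp a b t) ->
  has_derivative (f \o lerp a b) (dotp (gradf (lerp a b t)) (b - a)) t.
Proof.
move=> Hf eps eps0; set nD := enorm (b - a).
have nD1 : 0 < nD + 1 by rewrite ltr_wpDl ?enorm_ge0.
have [del del0 Hdel] := Hf (eps / (nD + 1)) (divr_gt0 eps0 nD1).
exists (del / (nD + 1)) => [|s]; first by rewrite divr_gt0.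
rewrite ltr_pdivlMr // => st.
have nD0 : 0 <= nD := enorm_ge0 _.
have close : enorm (lerp a b s - lerp a b t) < del.
  by rewrite enorm_lerpB -/nD; have := normr_ge0 (s - t); nra.
have := Hdel _ close; rewrite lerpB dotpZr enormZ -/nD => /le_trans; apply.
rewrite [_ * nD]mulrC mulrA ler_wpM2r // mulrAC ler_pdivrMr // ler_wpM2l ?(ltW eps0) //.
by rewrite lerDl.
Qed.

Lemma locally_lipschitz_lerp (g : vec -> vec) L a b t :
  locally_lipschitz_at g L (lerp a b t) ->
  exists2 del, 0 < del & forall s s', `|s - t| < del -> `|s' - t| < del ->
    enorm (g (lerp a b s) - g (lerp a b s')) <= L * enorm (b - a) * `|s - s'|.
Proof.
move=> [del del0 Hdel]; set nD := enorm (b - a).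
have nD1 : 0 < nD + 1 by rewrite ltr_wpDl ?enorm_ge0.
have nD0 : 0 <= nD := enorm_ge0 _.
have close r : `|r - t| < del / (nD + 1) -> enorm (lerp a b r - lerp a b t) < del.
  rewrite ltr_pdivlMr // enorm_lerpB -/nD => rt.
  by have := normr_ge0 (r - t); nra.
exists (del / (nD + 1)) => [|s s' /close st /close s't]; first by rewrite divr_gt0.
by have := Hdel _ _ st s't; rewrite enorm_lerpB -/nD mulrAC mulrA.
Qed.

Lemma descent_lemma (f : vec -> R) (g : vec -> vec) L a b :
  (forall t, 0 <= t <= 1 -> is_gradient_at f g (lerp a b t)) ->
  (forall t, 0 <= t <= 1 -> locally_lipschitz_at g L (lerp a b t)) ->
  f b - f a <= dotp (g a) (b - a) + L / 2 * enorm (b - a) ^+ 2.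
Proof.
move=> Hgrad Hlip; set nD := enorm (b - a); set G := dotp (g a) (b - a).
have g_lerp t : 0 <= t <= 1 -> enorm (g (lerp a b t) - g a) <= L * nD * t.
  move=> ht; have := locally_lipschitz_bound (fun s hs => locally_lipschitz_lerp (Hlip s hs)) ht.
  by rewrite lerp0 subr0.
pose k := (f \o lerp a b) \+ (fun s => - G * s + - (L / 2 * nD ^+ 2) * s ^+ 2).
have : k 1 <= k 0.
  apply: (@has_derivative_nonpos_le _ k
    (fun t => dotp (g (lerp a b t)) (b - a) + (- G + 2 * - (L / 2 * nD ^+ 2) * t))) => // t ht.
    exact/has_derivativeD/has_derivative_quadratic/has_derivative_lerp/Hgrad.
  have := cauchy_schwarz (g (lerp a b t) - g a) (b - a); rewrite dotpBl -/G -/nD.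
  have := ler_wpM2r (enorm_ge0 (b - a)) (g_lerp t ht); rewrite -/nD.
  lra.
by rewrite /k /= lerp0 lerp1; lra.
Qed.

Lemma lipg_lt_locally_lipschitz (g : vec -> vec) (L : R) (xb : vec) :
  (lipg g xb < L%:E)%E -> locally_lipschitz_at g L xb.
Proof.
move=> /ereal_inf_lt[_ [del del0 <-] supL]; exists del => // x x' hx hx'.
have [->|x'x] := eqVneq x' x; first by rewrite !subrr enorm0 mulr0.
have nxx' : 0 < enorm (x - x') by rewrite enorm_gt0 subr_eq0 eq_sym.
rewrite -ler_pdivrMr // ltW // -lte_fin; apply: le_lt_trans supL.
by apply: ereal_sup_ubound; exists x, x'.
Qed.

Lemma descent_lemma_lipg (f : vec -> R) (g : vec -> vec) L a b :
  (forall t, 0 <= t <= 1 -> is_gradient_at f g (lerp a b t)) ->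
  (forall t, 0 <= t <= 1 -> (lipg g (lerp a b t) <= L%:E)%E) ->
  f b - f a <= dotp (g a) (b - a) + L / 2 * enorm (b - a) ^+ 2.
Proof.
move=> Hgrad Hlip; apply: (@ler_slack _ _ _ (enorm (b - a) ^+ 2 / 2)) => e e0 _.
have Le : forall t, 0 <= t <= 1 -> locally_lipschitz_at g (L + e) (lerp a b t).
  move=> t ht; apply: lipg_lt_locally_lipschitz.
  by apply: le_lt_trans (Hlip t ht) _; rewrite lte_fin ltrDl.
by have := descent_lemma Hgrad Le; lra.
Qed.

Lemma lerp_in_closure_hull (xs : nat -> vec) m n t : 0 <= t <= 1 ->
  eclosure (conv_hull (range xs)) (lerp (xs m) (xs n) t).
Proof.
case/andP=> t0 t1 eps eps0; exists (lerp (xs m) (xs n) t); last by rewrite subrr enorm0.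
exists 2%N, (fun i : 'I_2 => if val i == 0%N then t else 1 - t),
  (fun i : 'I_2 => if val i == 0%N then xs n else xs m).
split.
- by move=> i; case: ifP => _ //; rewrite subr_ge0.
- by rewrite !big_ord_recl big_ord0 /= addr0 addrC subrK.
- by move=> i; case: ifP => _; [exists n | exists m].
- by rewrite !big_ord_recl big_ord0 /= addr0.
Qed.

Lemma edom_lerp (phi : vec -> \bar R) a b (Pa Pb : R) t :
  econvex phi -> phi a = Pa%:E -> phi b = Pb%:E -> 0 <= t <= 1 ->
  edom phi (lerp a b t).
Proof.
move=> cvx phia phib /andP[t0 t1]; apply: (le_lt_trans (cvx b a t t0 t1)).
by rewrite phia phib -!EFinM -EFinD ltry.
Qed.

Lemma prox_finite (lam : R) (phi : vec -> \bar R) (z p : vec) :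
  eproper phi -> is_prox lam phi z p -> exists P : R, phi p = P%:E.
Proof.
move=> [noninf [y phiy]] /(_ y); case: (phi p) (noninf p) => [P _ _| _ |//]; first by exists P.
by case: (phi y) phiy.
Qed.

Lemma prox_subgradient (lam : R) (phi : vec -> \bar R) (z p q : vec) (P Q : R) :
  0 < lam -> econvex phi -> is_prox lam phi z p -> phi p = P%:E -> phi q = Q%:E ->
  P + lam^-1 * dotp (z - p) (q - p) <= Q.
Proof.
move=> lam0 cvx prox phip phiq.
apply: (@ler_slack _ _ _ (lam^-1 / 2 * enorm (q - p) ^+ 2)) => t t0 t1.
have := le_trans (prox (lerp p q t)) (leeD2r _ (cvx q p t (ltW t0) t1)).
rewrite phip phiq -!EFinM -!EFinD lee_fin.
have -> : z - lerp p q t = (z - p) + (- t) *: (q - p).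
  by apply/rowP => i; rewrite !mxE; ring.
rewrite (enorm_sqD (z - p)) dotpZr enormZ normrN ger0_norm ?(ltW t0) // invfM => H.
rewrite -(ler_pM2l t0); nra.
Qed.

End Segment.

Theorem lemma2p8 (R : realType) (d : nat)
    (phi : 'rV[R]_d -> \bar R) (f : 'rV[R]_d -> R) (gradf : 'rV[R]_d -> 'rV[R]_d)
    (U : set 'rV[R]_d)
    (Omega : Type) (lam : R) (alpha : nat -> R) (z0 : 'rV[R]_d)
    (g : nat -> Omega -> 'rV[R]_d) (z x : nat -> Omega -> 'rV[R]_d) :
  econvex phi -> elsc phi -> eproper phi ->
  eopen U -> edom phi `<=` U -> C1_on U f gradf ->
  0 < lam -> (forall k, 0 < alpha k) ->
  (forall w, z 0%N w = z0) ->
  (forall k w, is_prox lam phi (z k w) (x k w)) ->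
  (forall k w, z k.+1 w =
     z k w - alpha k *: (g k w + lam^-1 *: (z k w - x k w))) ->
  forall (w : Omega) (m n : nat), (m < n)%N ->
  forall Lr : R,
    ereal_sup [set lipg gradf xb | xb in eclosure (conv_hull (range (fun k => x k w)))]
      = Lr%:E ->
    ((f (x n w))%:E + phi (x n w) - ((f (x m w))%:E + phi (x m w)) <=
     ((Lr / 2 - lam^-1) * enorm (x n w - x m w) ^+ 2
      + dotp (gradf (x m w) + lam^-1 *: (z m w - x m w)) (x n w - x m w)
      + lam^-1 * dotp (z n w - z m w) (x n w - x m w))%:E)%E.
Proof.
move=> cvx _ proper _ domU C1 lam0 _ _ prox _ w m n _ Lr supL.
set a := x m w; set b := x n w.
have [Pa phia] := prox_finite proper (prox m w).
have [Pb phib] := prox_finite proper (prox n w).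
have grad_lerp t : 0 <= t <= 1 -> is_gradient_at f gradf (lerp a b t).
  by move=> ht; have [] := C1 _ (domU _ (edom_lerp cvx phia phib ht)).
have lip_lerp t : 0 <= t <= 1 -> (lipg gradf (lerp a b t) <= Lr%:E)%E.
  move=> ht; rewrite -supL; apply: ereal_sup_ubound.
  by exists (lerp a b t) => //; apply: lerp_in_closure_hull.
have descent := descent_lemma_lipg grad_lerp lip_lerp.
have subgrad := prox_subgradient lam0 cvx (prox n w) phib phia.
have split_zn : dotp (z n w - b) (a - b) =
    enorm (b - a) ^+ 2 - dotp (z n w - z m w) (b - a) - dotp (z m w - a) (b - a).
  have -> : z n w - b = (z n w - z m w) + (z m w - a) - (b - a).
    by apply/rowP => i; rewrite !mxE; ring.
  by rewrite -[a - b]opprB dotpNr dotpBl dotpDl enorm_sq; ring.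
rewrite phia phib -!EFinD lee_fin dotpDl dotpZl.
rewrite split_zn in subgrad; lra.
Qed.
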